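(* Let $p,p'\ge1$ with $|p-p'|=1$, $p_{\min}=\min\{p,p'\}$, and let $S$ be a Sturmian word. A palindrome $X$ is maximal in $S$ if and only if the palindrome $a^{p_{\min}}\,b\,\alpha_{(p,p')}(X)\,a^{p_{\min}}$ is maximal in $\alpha_{(p,p')}(S)$.
   Context: $\alpha_{(p,p')}$ is the morphism $a\mapsto a^pb$, $b\mapsto a^{p'}b$. A Sturmian word is a right-infinite aperiodic word over $\{a,b\}$ with exactly $n+1$ factors of each length $n$. A palindrome is a word equal to its reverse. A palindrome $P$ is maximal in a word $W$ if $lPl'$ is a factor of $W$ for some letters $l\neq l'$ in $\{a,b\}$. *)

From HB Require Import structures.
From mathcomp Require Import all_boot.
Set Implicit Arguments. Unset Strict Implicit. Unset Printing Implicit Defensive.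

Inductive letter := La | Lb.

Definition letter_eqb (x y : letter) : bool :=
  match x, y with La, La | Lb, Lb => true | _, _ => false end.

Lemma letter_eqP : Equality.axiom letter_eqb.
Proof. by case; case; constructor. Qed.

HB.instance Definition _ := hasDecEq.Build letter letter_eqP.

Definition word := seq letter.
Definition iword := nat -> letter.

Definition factor (w : word) (S : iword) : Prop :=
  exists i, w = mkseq (fun k => S (i + k)) (size w).

Definition pref (S : iword) (n : nat) : word := mkseq S n.

Definition aperiodic (S : iword) : Prop :=
  ~ (exists per N, 0 < per /\ forall n, N <= n -> S (n + per) = S n).

Definition factor_complexity_n1 (S : iword) : Prop :=
  forall n, exists L : seq word,
    uniq L /\ size L = n.+1 /\
    forall w, size w = n -> (factor w S <-> w \in L).

Definition sturmian (S : iword) : Prop := aperiodic S /\ factor_complexity_n1 S.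

Definition palindrome (w : word) : Prop := rev w = w.

Definition maximal_in (P : word) (S : iword) : Prop :=
  exists l l' : letter, l <> l' /\ factor (l :: P ++ [:: l']) S.

Definition alpha_letter (p p' : nat) (x : letter) : word :=
  match x with La => rcons (nseq p La) Lb | Lb => rcons (nseq p' La) Lb end.

Definition alpha (p p' : nat) (w : word) : word :=
  flatten (map (alpha_letter p p') w).

(* image of an infinite word: the i-th letter of alpha(S) is read off
   alpha(prefix of length i+1 of S), which has length >= i+1 *)
Definition alpha_inf (p p' : nat) (S : iword) : iword :=
  fun i => nth La (alpha p p' (pref S i.+1)) i.

From mathcomp Require Import all_boot zify.
From Stdlib Require Import Classical.

Set Implicit Arguments. Unset Strict Implicit. Unset Printing Implicit Defensive.

(* The image of a letter x under alpha_(p,p') is a block a^e(x) b, and since the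
   exponents e(a), e(b) are p_min and p_min + 1 in some order, alpha is a prefix
   code and every b of alpha(S) ends a block.  If l X l' (l <> l') occurs in S, it
   occurs preceded by some letter, because Sturmian words are recurrent (by the
   Morse-Hedlund argument); its image b a^e(l) b alpha(X) a^e(l') b then shows
   a^p_min b alpha(X) a^p_min between a b and an a, in one order or the other.
   Conversely, in an occurrence of l a^p_min b alpha(X) a^p_min l' in alpha(S) the
   displayed b ends the block of some letter x of S, and decoding what follows
   yields X z; the letter l is determined by e(x) and l' by e(z), so x <> z. *)

Section Windows.

Variable T : iword.

Definition window (i k : nat) : word := mkseq (fun l => T (i + l)) k.

Definition occurs_at (v : word) (i : nat) : Prop := v = window i (size v).

Lemma size_window i k : size (window i k) = k.
Proof. exact: size_mkseq. Qed.

Lemma nth_window i k l : l < k -> nth La (window i k) l = T (i + l).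
Proof. exact: nth_mkseq. Qed.

Lemma window_cons i k : window i k.+1 = T i :: window i.+1 k.
Proof.
rewrite /window /mkseq /= addn0 (iotaDl 1 0) -map_comp.
by congr (_ :: _); apply: eq_map => l /=; rewrite addnA addn1.
Qed.

Lemma take_window i k n : k <= n -> take k (window i n) = window i k.
Proof. by move=> lekn; rewrite /window /mkseq -map_take take_iota (minn_idPl lekn). Qed.

Lemma occurs_at_window i k : occurs_at (window i k) i.
Proof. by rewrite /occurs_at size_window. Qed.

Lemma occurs_atP v i : occurs_at v i <-> forall k, k < size v -> T (i + k) = nth La v k.
Proof.
split=> [occ k ltkv | occ]; first by rewrite occ nth_window.
by apply: (@eq_from_nth _ La) => [|k ltkv]; rewrite ?size_window ?nth_window ?occ.
Qed.

Lemma occurs_at_cons x v i : occurs_at (x :: v) i <-> T i = x /\ occurs_at v i.+1.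
Proof.
rewrite /occurs_at /= window_cons; split=> [[-> <-] // | [<- occ]].
by rewrite -occ.
Qed.

Lemma occurs_at_mid u1 u2 u3 i :
  occurs_at (u1 ++ u2 ++ u3) i -> occurs_at u2 (i + size u1).
Proof.
move/occurs_atP=> occ; apply/occurs_atP => k ltk.
rewrite -addnA occ; last by rewrite !size_cat; lia.
by rewrite nth_cat ltnNge leq_addr addKn nth_cat ltk.
Qed.

Lemma occurs_at_catl u v i : occurs_at (u ++ v) i -> occurs_at u i.
Proof. by move/(@occurs_at_mid [::]); rewrite addn0. Qed.

Lemma factor_mid u1 u2 u3 : factor (u1 ++ u2 ++ u3) T -> factor u2 T.
Proof. by case=> i /occurs_at_mid; exists (i + size u1). Qed.

Lemma occurs_at_prefix u v i :
  occurs_at u i -> occurs_at v i -> size v <= size u -> u = v ++ drop (size v) u.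
Proof.
move=> occ_u occ_v le_vu; rewrite -{1}(cat_take_drop (size v) u); congr (_ ++ _).
by rewrite occ_u take_window // -occ_v.
Qed.

Definition right_determined (k : nat) : Prop :=
  forall i j, window i k = window j k -> T (i + k) = T (j + k).

Lemma right_determined_shift k i j :
  right_determined k -> window i k = window j k -> forall n, T (i + n) = T (j + n).
Proof.
move=> det eq_ij; elim/ltn_ind => n IH.
have [ltnk | lekn] := ltnP n k; first by rewrite -!(nth_window _ ltnk) eq_ij.
have -> : i + n = i + (n - k) + k by lia.
have -> : j + n = j + (n - k) + k by lia.
apply: det; apply: (@eq_from_nth _ La) => [|l]; rewrite !size_window // => ltlk.
by rewrite !nth_window // -!addnA; apply: IH; lia.
Qed.

End Windows.

Section MorseHedlund.

Variables (T : iword) (N : nat) (L : seq word).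
Hypotheses (size_L : size L <= N) (window_in_L : forall i, window T i N \in L).

Let prefixes k := undup (map (take k) L).

Let window_in_prefixes i k : k <= N -> window T i k \in prefixes k.
Proof. by move=> lekN; rewrite mem_undup -(take_window T i lekN) map_f. Qed.

Let size_prefixes k : size (prefixes k) <= N.
Proof. by rewrite (leq_trans (size_undup _)) // size_map. Qed.

Let prefixes_grow k :
  k < N -> ~ right_determined T k -> size (prefixes k) < size (prefixes k.+1).
Proof.
move=> ltkN not_det.
have [i [j [eq_ij neq_next]]] :
    exists i j, window T i k = window T j k /\ T (i + k) <> T (j + k).
  apply: NNPP => none; apply: not_det => i j eq_ij.
  by apply: NNPP => neq; apply: none; exists i, j.
set x := window T i k.+1; set y := window T j k.+1.
have x_neq_y : x != y.
  by apply/eqP => /(congr1 (nth La ^~ k)); rewrite !nth_window.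
have take_xy : take k x = take k y by rewrite !take_window.
have y_in : y \in prefixes k.+1 by apply: window_in_prefixes.
have sub : {subset prefixes k <= map (take k) (rem y (prefixes k.+1))}.
  move=> v; rewrite mem_undup => /mapP [w w_in ->].
  have -> : take k w = take k (take k.+1 w) by rewrite take_takel.
  have w_pre : take k.+1 w \in prefixes k.+1 by rewrite mem_undup map_f.
  case: (eqVneq (take k.+1 w) y) => [-> | neq_y].
    by rewrite -take_xy map_f // mem_rem_uniq ?undup_uniq // inE x_neq_y window_in_prefixes.
  by rewrite map_f // mem_rem_uniq ?undup_uniq // inE neq_y.
have := uniq_leq_size (undup_uniq _) sub; rewrite size_map size_rem //.
by case: (prefixes k.+1) y_in.
Qed.

(* Each failure of right determinacy below N adds a prefix, but there are at most N of them. *)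
Let exists_right_determined : exists2 k, k < N & right_determined T k.
Proof.
apply: NNPP => none.
have grow k : k <= N -> k < size (prefixes k).
  elim: k => [_ | k IH leSkN]; first by case: (prefixes 0) (window_in_prefixes 0 (leq0n N)).
  apply: leq_ltn_trans (prefixes_grow leSkN _); first exact: IH (ltnW leSkN).
  by move=> det; apply: none; exists k.
by have := grow N (leqnn N); rewrite ltnNge size_prefixes.
Qed.

Lemma eventually_periodic_of_few_windows :
  exists per M, 0 < per /\ forall n, M <= n -> T (n + per) = T n.
Proof.
have [k ltkN det] := exists_right_determined.
have [i [j [ltij ltjN eq_ij]]] :
    exists i j, [/\ i < j, j < N.+1 & window T i k = window T j k].
  pose s := mkseq (fun t => window T t k) N.+1.
  have : ~~ uniq s.
    apply: contraL (size_prefixes k) => uniq_s; rewrite -ltnNge.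
    have := uniq_leq_size uniq_s (s2 := prefixes k); rewrite size_mkseq; apply.
    by move=> _ /mapP [t _ ->]; apply: window_in_prefixes; apply: ltnW.
  case/(uniqPn [::]) => i [j [ltij ltjs]]; rewrite size_mkseq in ltjs.
  by rewrite !nth_mkseq ?(ltn_trans ltij) // => eq_ij; exists i, j.
exists (j - i), i; split=> [|n lein]; first by rewrite subn_gt0.
rewrite -{2}(subnKC lein) (right_determined_shift det eq_ij); congr T; lia.
Qed.

End MorseHedlund.

Lemma sturmian_factor_recurs S w :
  sturmian S -> factor w S -> exists2 i, 0 < i & occurs_at S w i.
Proof.
(* If w occurred only at 0, the shift of S would have at most |w| factors of length |w|. *)
move=> [aper complexity] w_factor; apply: NNPP => no_later.
have [L [uniq_L [size_L L_factors]]] := complexity (size w).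
have w_in_L : w \in L by apply/L_factors.
apply: aper.
have [|i|per [M [per_gt0 periodic]]] :=
  @eventually_periodic_of_few_windows (fun n => S n.+1) (size w) (rem w L).
- by rewrite size_rem // size_L.
- rewrite mem_rem_uniq // inE; apply/andP; split.
    by apply/eqP => eq_w; apply: no_later; exists i.+1; rewrite // -eq_w.
  by apply/L_factors; [apply: size_window | exists i.+1; apply: occurs_at_window].
- by exists per, M.+1; split=> // -[|n] // leMn; apply: periodic.
Qed.

Section Morphism.

Variables p p' : nat.

Definition alpha_exp (x : letter) : nat := match x with La => p | Lb => p' end.

Lemma alpha_letterE x : alpha_letter p p' x = nseq (alpha_exp x) La ++ [:: Lb].
Proof. by case: x; rewrite /= cats1. Qed.

Lemma size_alpha_letter x : size (alpha_letter p p' x) = (alpha_exp x).+1.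
Proof. by rewrite alpha_letterE size_cat size_nseq addn1. Qed.

Lemma nth_alpha_letter x k :
  nth La (alpha_letter p p' x) k = if k == alpha_exp x then Lb else La.
Proof.
rewrite alpha_letterE nth_cat size_nseq nth_nseq.
by case: ltngtP => [// | gt | ->]; [rewrite nth_default // subn_gt0 | rewrite subnn].
Qed.

Lemma alpha_cons x s : alpha p p' (x :: s) = alpha_letter p p' x ++ alpha p p' s.
Proof. by []. Qed.

Lemma alpha_cat s t : alpha p p' (s ++ t) = alpha p p' s ++ alpha p p' t.
Proof. by rewrite /alpha map_cat flatten_cat. Qed.

Lemma size_alpha_ge s : size s <= size (alpha p p' s).
Proof.
elim: s => //= x s IH; rewrite alpha_cons size_cat size_alpha_letter.
by rewrite addSn ltnS (leq_trans IH) ?leq_addl.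
Qed.

Lemma nseq_Lb_inj r r' s s' :
  nseq r La ++ Lb :: s = nseq r' La ++ Lb :: s' -> r = r' /\ s = s'.
Proof. by elim: r r' => [|r IH] [|r'] //= [] // /IH [-> ->]. Qed.

Lemma alpha_prefix_inj Y Z rest :
  p != p' -> alpha p p' Z = alpha p p' Y ++ rest ->
  exists2 Z', Z = Y ++ Z' & alpha p p' Z' = rest.
Proof.
move=> neq_pp'; elim: Y Z => [|y Y IH] Z; first by exists Z.
case: Z => [|z Z]; first by rewrite alpha_cons alpha_letterE -catA; case: nseq.
rewrite !alpha_cons !alpha_letterE -!catA => /nseq_Lb_inj [eq_exp /IH [Z' -> <-]].
exists Z' => //; congr (_ :: _).
by move: eq_exp neq_pp'; case: z; case: y => //= ->; rewrite eqxx.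
Qed.

Lemma pref_add S i n : pref S (i + n) = pref S i ++ window S i n.
Proof.
rewrite /pref /window /mkseq iotaD map_cat add0n.
have -> : iota i n = map (addn i) (iota 0 n) by rewrite -iotaDl addn0.
by rewrite -map_comp.
Qed.

Section InfiniteImage.

Variable S : iword.

Definition block_start (t : nat) : nat := size (alpha p p' (pref S t)).

Lemma block_start0 : block_start 0 = 0.
Proof. by []. Qed.

Lemma nth_alpha_pref_mono N M j :
  N <= M -> j < block_start N ->
  nth La (alpha p p' (pref S M)) j = nth La (alpha p p' (pref S N)) j.
Proof. by move=> /subnKC <- ltj; rewrite pref_add alpha_cat nth_cat ltj. Qed.

Lemma alpha_inf_nth N j :
  j < block_start N -> alpha_inf p p' S j = nth La (alpha p p' (pref S N)) j.
Proof.
move=> ltj; have [leN | ltN] := leqP N j.+1; first exact: nth_alpha_pref_mono.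
symmetry; apply: nth_alpha_pref_mono; first exact: ltnW.
by apply: leq_trans (size_alpha_ge _); rewrite size_mkseq.
Qed.

Lemma occurs_at_alpha u i :
  occurs_at S u i -> occurs_at (alpha_inf p p' S) (alpha p p' u) (block_start i).
Proof.
move=> occ; have pref_iu : pref S (i + size u) = pref S i ++ u by rewrite pref_add -occ.
apply/occurs_atP => k ltk.
rewrite (@alpha_inf_nth (i + size u)) /block_start pref_iu alpha_cat ?size_cat ?ltn_add2l //.
by rewrite nth_cat ltnNge leq_addr addKn.
Qed.

Lemma block_start_succ t : block_start t.+1 = block_start t + (alpha_exp (S t)).+1.
Proof.
by rewrite /block_start -addn1 pref_add alpha_cat size_cat /alpha /= cats0 addn0 size_alpha_letter.
Qed.

Lemma alpha_inf_block t k :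
  k <= alpha_exp (S t) ->
  alpha_inf p p' S (block_start t + k) = if k == alpha_exp (S t) then Lb else La.
Proof.
move=> lek; have occ_t : occurs_at S [:: S t] t by apply/occurs_atP => -[|] // _; rewrite addn0.
have /occurs_atP -> := occurs_at_alpha occ_t.
  by rewrite /alpha /= cats0 nth_alpha_letter.
by rewrite /alpha /= cats0 size_alpha_letter.
Qed.

Lemma Lb_block_end q : alpha_inf p p' S q = Lb -> exists t, q.+1 = block_start t.
Proof.
have [t /andP [le_tq lt_qt]] : exists t, block_start t <= q < block_start t.+1.
  elim: q => [|q [t /andP [le_tq lt_qt]]]; first by exists 0; rewrite block_start_succ.
  have [lt_q1 | le_q1] := ltnP q.+1 (block_start t.+1); first by exists t; rewrite lt_q1 ltnW.
  by exists t.+1; rewrite (block_start_succ t.+1); lia.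
rewrite block_start_succ in lt_qt.
rewrite -(subnKC le_tq) alpha_inf_block; last by lia.
by case: ifP => // /eqP eq_k _; exists t.+1; rewrite block_start_succ; lia.
Qed.

End InfiniteImage.

End Morphism.

Section ConsecutiveExponents.

Variables p p' : nat.
Hypothesis p_p' : p = p'.+1 \/ p' = p.+1.

Local Notation m := (minn p p').

Definition pal_image (X : word) : word :=
  nseq m La ++ Lb :: alpha p p' X ++ nseq m La.

Definition alpha_mark (x : letter) : letter :=
  if alpha_exp p p' x == m then Lb else La.

Lemma alpha_exp_min x : alpha_exp p p' x = m \/ alpha_exp p p' x = m.+1.
Proof. by case: p_p' => ->; case: x => /=; lia. Qed.

Lemma alpha_exp_neq l l' :
  l <> l' ->
  alpha_exp p p' l = m /\ alpha_exp p p' l' = m.+1 \/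
  alpha_exp p p' l = m.+1 /\ alpha_exp p p' l' = m.
Proof. by case: l l' => [] [] // _; case: p_p' => -> /=; lia. Qed.

Lemma neq_p_p' : p != p'.
Proof. by case: p_p' => ->; lia. Qed.

Lemma maximal_pal_image_of_occurs S l l' X i :
  l <> l' -> occurs_at S (l :: X ++ [:: l']) i.+1 ->
  maximal_in (pal_image X) (alpha_inf p p' S).
Proof.
move=> neq_ll' occ.
have occ_ext : occurs_at S (S i :: l :: X ++ [:: l']) i by apply/occurs_at_cons.
have /(occurs_at_alpha p p') occ_img := occ_ext.
have img_factor : factor (alpha_letter p p' (S i) ++ alpha_letter p p' l ++
                          alpha p p' X ++ alpha_letter p p' l') (alpha_inf p p' S).
  by exists (block_start p p' S i); move: occ_img; rewrite !alpha_cons alpha_cat /alpha /= cats0.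
case: (alpha_exp_neq neq_ll') => [[exp_l exp_l'] | [exp_l exp_l']].
- exists Lb, La; split=> //.
  apply: (@factor_mid _ (nseq (alpha_exp p p' (S i)) La) _ [:: Lb]).
  move: img_factor; rewrite !alpha_letterE exp_l exp_l'.
  by rewrite /pal_image -addn1 nseqD -!catA /= -!catA !cat_cons -!catA.
- exists La, Lb; split=> //.
  apply: (@factor_mid _ (alpha_letter p p' (S i)) _ [::]).
  by move: img_factor; rewrite !alpha_letterE exp_l exp_l' /pal_image -!catA /= -!catA cats0.
Qed.

Lemma block_ending_at S j :
  alpha_inf p p' S (j + m.+1) = Lb ->
  exists s, block_start p p' S s.+1 = j + m.+2 /\ alpha_inf p p' S j = alpha_mark (S s).
Proof.
case/Lb_block_end => -[|s] start_s; first by rewrite block_start0 in start_s.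
exists s; split; first by rewrite -start_s !addnS.
rewrite block_start_succ /alpha_mark in start_s *.
have [exp_s | exp_s] := alpha_exp_min (S s); rewrite exp_s in start_s *; last first.
  have -> : j = block_start p p' S s + 0 by lia.
  by rewrite alpha_inf_block exp_s // (gtn_eqF (ltnSn m)).
case: s exp_s start_s => [|s] _ start_s; first by rewrite block_start0 in start_s; lia.
rewrite block_start_succ in start_s.
have -> : j = block_start p p' S s + alpha_exp p p' (S s) by lia.
by rewrite alpha_inf_block // !eqxx.
Qed.

Lemma mark_after_image S X l t :
  occurs_at (alpha_inf p p' S) (alpha p p' X ++ nseq m La ++ [:: l]) (block_start p p' S t) ->
  exists z, occurs_at S (X ++ [:: z]) t /\ l = alpha_mark z.
Proof.
set v := _ ++ _ => occ_v.
have occ_Z := occurs_at_window S t (size v).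
have le_vZ : size v <= size (alpha p p' (window S t (size v))).
  by rewrite (leq_trans _ (size_alpha_ge _ _ _)) ?size_window.
have := occurs_at_prefix (occurs_at_alpha p p' occ_Z) occ_v le_vZ.
rewrite /v -catA => /(alpha_prefix_inj neq_p_p') [[|z Z] eq_Z]; first by case: m.
have m_le : m < (alpha_exp p p' z).+1 by rewrite ltnS; case: (alpha_exp_min z) => ->.
rewrite alpha_cons -catA => /(congr1 (nth La ^~ m)).
rewrite !nth_cat size_alpha_letter m_le size_nseq ltnn subnn nth_alpha_letter eq_sym /= => mark.
exists z; split; last by rewrite -mark.
have : occurs_at S ((X ++ [:: z]) ++ Z) t by rewrite -catA -eq_Z.
exact: occurs_at_catl.
Qed.

Lemma maximal_of_maximal_pal_image S X :
  maximal_in (pal_image X) (alpha_inf p p' S) -> maximal_in X S.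
Proof.
case=> l [l' [neq_ll' [j occ]]].
have /occurs_atP word_at := occ.
have size_word : size (l :: pal_image X ++ [:: l']) = (m + size (alpha p p' X) + m).+3.
  by rewrite /pal_image /= !size_cat /= !size_cat !size_nseq; lia.
have l_at : alpha_inf p p' S j = l by rewrite -[j]addn0 word_at ?size_word.
have b_at : alpha_inf p p' S (j + m.+1) = Lb.
  rewrite word_at; last by rewrite size_word; lia.
  by rewrite /= /pal_image -catA nth_cat size_nseq ltnn subnn.
have [s [start_s mark_s]] := block_ending_at b_at.
have occ_rest : occurs_at (alpha_inf p p' S) (alpha p p' X ++ nseq m La ++ [:: l'])
                          (block_start p p' S s.+1).
  have split_word : l :: pal_image X ++ [:: l'] =
      (l :: nseq m La ++ [:: Lb]) ++ (alpha p p' X ++ nseq m La ++ [:: l']) ++ [::].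
    by rewrite cats0 /pal_image /= -!catA /= -!catA.
  by move: occ; rewrite start_s split_word => /occurs_at_mid; rewrite /= size_cat size_nseq addn1.
have [z [occ_z mark_z]] := mark_after_image occ_rest.
exists (S s), z; split.
  by move=> eq_sz; apply: neq_ll'; rewrite -l_at mark_s mark_z eq_sz.
by exists s; apply/occurs_at_cons.
Qed.

End ConsecutiveExponents.

Theorem lemma2 (p p' : nat) (S : iword) (X : word) :
  1 <= p -> 1 <= p' -> (p = p'.+1 \/ p' = p.+1) ->
  sturmian S -> palindrome X ->
  (maximal_in X S <->
   maximal_in (nseq (minn p p') La ++ Lb :: alpha p p' X ++ nseq (minn p p') La)
              (alpha_inf p p' S)).
Proof.
move=> _ _ p_p' sturmian_S _; split; last exact: maximal_of_maximal_pal_image.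
case=> l [l' [neq_ll' occ]].
have [[|i] // _ occ_later] := sturmian_factor_recurs sturmian_S occ.
exact: maximal_pal_image_of_occurs neq_ll' occ_later.
Qed.
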